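(* For every $d\ge 2$ there exists a constant $C$ such that for all $n\ge 2$ and all integers $k\ge 0$ the following holds: in a regular $d$-dimensional toroidal grid $(\mathbb{Z}/N\mathbb{Z})^d$ with $N^d\le n$ vertices, the number of subsets of size $k$ that have at most $\frac{k}{\log n}$ *-connected components is at most $C^k$.
   Context: Two vertices of the toroidal grid $(\mathbb{Z}/N\mathbb{Z})^d$ are *-adjacent if they are distinct and their $\ell_\infty$-distance (in the discrete torus) is at most $1$; *-connected components of a subset are its connected components with respect to *-adjacency. $\log$ is the natural logarithm. *)

From HB Require Import structures.
From mathcomp Require Import all_boot all_order all_algebra.
From mathcomp Require Import all_classical all_reals all_analysis.
Set Implicit Arguments. Unset Strict Implicit. Unset Printing Implicit Defensive.
Import Order.TTheory GRing.Theory Num.Theory.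

Definition torus (N d : nat) := {ffun 'I_d -> 'I_N}.

Definition cdist_le1 (N : nat) (a b : 'I_N) : bool :=
  (((a + N - b) %% N) <= 1)%N || (((b + N - a) %% N) <= 1)%N.

(* *-adjacency: distinct, and l_infty torus distance at most 1 *)
Definition star_adj (N d : nat) (x y : torus N d) : bool :=
  (x != y) && [forall i, cdist_le1 (x i) (y i)].

Definition star_adj_in (N d : nat) (S : {set torus N d}) : rel (torus N d) :=
  fun x y => [&& x \in S, y \in S & star_adj x y].

Definition star_ncomp (N d : nat) (S : {set torus N d}) : nat :=
  n_comp (star_adj_in S) S.

(** A set [S] of size [k] with at most [c] components is encoded by a pair
    [(R, S :|: W)]: [R] is a set of component representatives of [S], and [W]
    is any set avoiding the closed neighbourhood [nbhd S].  Since [S] is a union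
    of components of [S :|: W], it is the union of the components that meet [R],
    so the encoding is injective.  Each [S] has at least [2 ^ (#|T| - M * k)]
    choices of [W] when closed neighbourhoods have at most [M] points, while
    there are at most [#|T|.+1 ^ c * 2 ^ #|T|] codes; hence there are at most
    [#|T|.+1 ^ c * 2 ^ (M * k)] such sets.  On the torus [M = 3 ^ d], and if
    [c <= k / ln n] with [#|T| <= n] then [#|T|.+1 ^ c <= n ^ (2 * c) <= e ^ (2 * k)]. *)

From HB Require Import structures.
From mathcomp Require Import all_boot all_order all_algebra.
From mathcomp Require Import all_classical all_reals all_analysis.
Import Order.TTheory GRing.Theory Num.Theory.
From mathcomp Require Import zify lra.
(* Re-imported so that their lemma names shadow the homonymous ones of classical_sets. *)
From mathcomp Require Import fintype finset fingraph.

Set Implicit Arguments. Unset Strict Implicit. Unset Printing Implicit Defensive.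

Section FewComponentsCounting.
Variables (T : finType) (e : rel T) (M : nat).
Hypothesis e_sym : symmetric e.

Definition closed_nbhd (x : T) : {set T} := [set y | (y == x) || e x y].
Hypothesis card_closed_nbhd_le : forall x, #|closed_nbhd x| <= M.

Definition rel_in (S : {set T}) : rel T := fun x y => [&& x \in S, y \in S & e x y].
Definition nbhd (S : {set T}) : {set T} := \bigcup_(x in S) closed_nbhd x.
Definition comp_roots (S : {set T}) : {set T} := [set x in S | roots (rel_in S) x].
Definition cluster (R W : {set T}) : {set T} :=
  [set y in W | [exists r in R, connect (rel_in W) r y]].
Definition few_comp (k c : nat) : {set {set T}} :=
  [set S : {set T} | (#|S| == k) && (n_comp (rel_in S) S <= c)].

Lemma rel_in_sym (S : {set T}) : symmetric (rel_in S).
Proof. by move=> x y; rewrite /rel_in e_sym; case: (x \in S); case: (y \in S). Qed.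

Lemma card_nbhd (S : {set T}) : #|nbhd S| <= M * #|S|.
Proof.
rewrite /nbhd mulnC -sum_nat_const.
elim/big_rec2: _ => [|x m U _ leUm]; first by rewrite cards0.
exact: leq_trans (leq_card_setU _ _).1 (leq_add (card_closed_nbhd_le x) leUm).
Qed.

Lemma subset_nbhd (S : {set T}) : S \subset nbhd S.
Proof. by apply/subsetP => x xS; apply/bigcupP; exists x; rewrite ?inE ?eqxx. Qed.

Lemma card_comp_roots (S : {set T}) : #|comp_roots S| = n_comp (rel_in S) S.
Proof. by apply: eq_card => x; rewrite inE andbC. Qed.

Lemma closed_rel_in_nbhd (S W : {set T}) :
  [disjoint W & nbhd S] -> closed (rel_in (S :|: W)) (mem S).
Proof.
move=> dis_WS.
have stay a b : rel_in (S :|: W) a b -> a \in S -> b \in S.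
  move=> /and3P[_ /setUP[//|bW] eab] aS.
  have : b \in nbhd S by apply/bigcupP; exists a; rewrite // inE eab orbT.
  by rewrite (disjointFr dis_WS bW).
by move=> a b ab; apply/idP/idP; apply: stay; rewrite // rel_in_sym.
Qed.

Lemma cluster_comp_roots (S W : {set T}) :
  [disjoint W & nbhd S] -> cluster (comp_roots S) (S :|: W) = S.
Proof.
move=> dis_WS; apply/setP => y; rewrite inE.
apply/andP/idP => [[_ /existsP[r /andP[]]]|yS].
  rewrite inE => /andP[rS _] /(closed_connect (closed_rel_in_nbhd dis_WS)).
  by move <-.
split; first by rewrite inE yS.
have sym_S := sym_connect_sym (rel_in_sym S).
have closed_S : closed (rel_in S) (mem S) by move=> a b /and3P[-> ->].
have root_y := connect_root (rel_in S) y.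
apply/existsP; exists (root (rel_in S) y).
rewrite inE roots_root // -(closed_connect closed_S root_y) yS /=.
rewrite sym_S in root_y; apply: connect_sub root_y => a b /and3P[aS bS eab].
by apply: connect1; rewrite /rel_in !inE aS bS.
Qed.

Lemma card_sets_le c : #|[set R : {set T} | #|R| <= c]| <= #|T|.+1 ^ c.
Proof.
elim: c => [|c IHc].
  rewrite expn0 -(cards1 (set0 : {set T})); apply: subset_leq_card.
  by apply/subsetP => R; rewrite !inE leqn0 cards_eq0.
pose add (p : option T * {set T}) := if p.1 is Some x then x |: p.2 else p.2.
have sub_add : [set R : {set T} | #|R| <= c.+1]
    \subset add @: setX [set: option T] [set R : {set T} | #|R| <= c].
  apply/subsetP => R; rewrite inE => le_Rc.
  have [R0|[x xR]] := set_0Vmem R.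
    by apply/imsetP; exists (None, set0); rewrite ?R0 // !inE cards0.
  apply/imsetP; exists (Some x, R :\ x); last by rewrite /add /= setD1K.
  by move: le_Rc; rewrite (cardsD1 x) xR !inE.
rewrite expnS; apply: leq_trans (subset_leq_card sub_add) _.
apply: leq_trans (leq_imset_card _ _) _.
by rewrite cardsX cardsT card_option leq_mul2l IHc orbT.
Qed.

Definition pads (S : {set T}) : {set {set T}} := powerset (~: nbhd S).
Definition pads_pairs (A : {set {set T}}) : {set {set T} * {set T}} :=
  [set p | (p.1 \in A) && (p.2 \in pads p.1)].
Definition encode (p : {set T} * {set T}) := (comp_roots p.1, p.1 :|: p.2).

Lemma encode_inj (A : {set {set T}}) : {in pads_pairs A &, injective encode}.
Proof.
move=> [S W] [S' W']; rewrite !inE -!disjoints_subset /=.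
move=> /andP[_ dis] /andP[_ dis'] [eq_roots eq_union].
have eq_S : S = S'.
  by rewrite -(cluster_comp_roots dis) -(cluster_comp_roots dis') eq_roots eq_union.
have dis_SW (S1 W1 : {set T}) :
    [disjoint W1 & nbhd S1] -> W1 = (S1 :|: W1) :\: S1.
  move=> dis1; rewrite setDUl setDv set0U; apply/esym/setDidPl.
  exact: disjointWr (subset_nbhd S1) dis1.
by rewrite (dis_SW _ _ dis) (dis_SW _ _ dis') eq_union eq_S.
Qed.

Lemma card_pads_pairs (A : {set {set T}}) :
  #|pads_pairs A| = \sum_(S in A) 2 ^ #|~: nbhd S|.
Proof.
rewrite -sum1_card (eq_bigl _ _ (fun p => in_set _ p)).
rewrite -(pair_big_dep (mem A) (fun S => mem (pads S)) (fun _ _ => 1)) /=.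
by apply: eq_bigr => S _; rewrite sum1_card card_powerset.
Qed.

Lemma card_few_comp k c : #|few_comp k c| <= #|T|.+1 ^ c * 2 ^ (M * k).
Proof.
set A := few_comp k c.
have lower : #|A| * 2 ^ (#|T| - M * k) <= #|pads_pairs A|.
  rewrite card_pads_pairs -sum_nat_const; apply: leq_sum => S.
  rewrite inE => /andP[/eqP card_S _].
  by rewrite leq_exp2l // cardsCs setCK leq_sub2l // -card_S card_nbhd.
have upper : #|pads_pairs A| <= #|T|.+1 ^ c * 2 ^ #|T|.
  rewrite -(card_in_imset (@encode_inj A)).
  apply: (@leq_trans #|setX [set R : {set T} | #|R| <= c] (powerset [set: T])|); last first.
    by rewrite cardsX card_powerset cardsT leq_mul2r card_sets_le orbT.
  apply: subset_leq_card; apply/subsetP => _ /imsetP[[S W] + ->].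
  by rewrite !inE /= subsetT andbT card_comp_roots => /andP[/andP[_ ->]].
rewrite -(leq_pmul2r (expn_gt0 2 (#|T| - M * k))) -mulnA -expnD.
apply: leq_trans (leq_trans lower upper) _.
by rewrite leq_mul2l leq_exp2l // -leq_subLR leqnn orbT.
Qed.

End FewComponentsCounting.

Lemma modn_lt3 N x : x < 3 * N ->
  x %% N = if x < N then x else if x < 2 * N then x - N else x - 2 * N.
Proof.
move=> lt_x3N; case: ltnP => le_Nx; first by rewrite modn_small.
case: ltnP => le_2Nx.
  by rewrite -{1}(subnK le_Nx) modnDr modn_small //; lia.
by rewrite -{1}(subnK le_2Nx) addnC modnMDl modn_small //; lia.
Qed.

Definition cyc_offset N (a b : nat) := (b + N + 1 - a) %% N.

Section TorusNeighbourhood.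
Variables N d : nat.

Lemma cyc_offset_lt3 (a b : 'I_N) : cdist_le1 a b -> cyc_offset N a b < 3.
Proof.
have lt_aN := ltn_ord a; have lt_bN := ltn_ord b.
rewrite /cdist_le1 /cyc_offset !modn_lt3; try lia.
by repeat case: ifP; lia.
Qed.

Lemma cyc_offsetK (a b : 'I_N) : (a + N - 1 + cyc_offset N a b) %% N = b.
Proof.
have lt_aN := ltn_ord a; have lt_bN := ltn_ord b.
rewrite /cyc_offset (@modn_lt3 N (b + N + 1 - a)); try lia.
by repeat case: ifP; move=> *; rewrite modn_lt3; try lia; repeat case: ifP; lia.
Qed.

Lemma cdist_le1_refl (a : 'I_N) : cdist_le1 a a.
Proof. by rewrite /cdist_le1 addnC addnK modnn. Qed.

Lemma star_adj_sym : symmetric (@star_adj N d).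
Proof.
move=> x y; rewrite /star_adj eq_sym; congr (_ && _).
by apply: eq_forallb => i; rewrite /cdist_le1 orbC.
Qed.

Lemma card_star_closed_nbhd (x : torus N d) : #|closed_nbhd (@star_adj N d) x| <= 3 ^ d.
Proof.
have near_x y : y \in closed_nbhd (@star_adj N d) x -> forall i, cdist_le1 (x i) (y i).
  by rewrite inE => /orP[/eqP -> i|/andP[_ /forallP]] //; apply: cdist_le1_refl.
pose offset (y : torus N d) : {ffun 'I_d -> 'I_3} := [ffun i => inord (cyc_offset N (x i) (y i))].
have -> : 3 ^ d = #|{ffun 'I_d -> 'I_3}| by rewrite card_ffun !card_ord.
apply: (@leq_card_in _ _ offset) => y1 y2 /near_x near1 /near_x near2 /ffunP eq12.
apply/ffunP => i; apply: val_inj => /=.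
have := congr1 val (eq12 i); rewrite !ffunE /= !inordK ?cyc_offset_lt3 // => eq_off.
by rewrite -(cyc_offsetK (x i) (y1 i)) eq_off cyc_offsetK.
Qed.

End TorusNeighbourhood.

Local Open Scope ring_scope.

Lemma natr_succX_le_expR (R : realType) (n m c k : nat) :
  (2 <= n)%N -> (m <= n)%N -> c%:R * ln (n%:R : R) <= k%:R ->
  ((m.+1 ^ c)%:R : R) <= expR 2 ^+ k.
Proof.
move=> n_ge2 le_mn c_ln_le.
have n_gt0 : (0 : R) < n%:R by rewrite ltr0n (leq_trans _ n_ge2).
have succ_le_sqr : (m.+1%:R : R) <= n%:R ^+ 2.
  by rewrite -natrX ler_nat expnS expn1; nia.
rewrite natrX (le_trans (lerXn2r c _ _ succ_le_sqr)) ?nnegrE ?exprn_ge0 ?ler0n //.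
rewrite -exprM -[X in X <= _]lnK ?posrE ?exprn_gt0 // lnXn // -expRM_natl ler_expR.
by rewrite -[ln _ *+ _]mulr_natr natrM; nra.
Qed.

Theorem claim3p4 (R : realType) (d : nat) (hd : (2 <= d)%N) :
  exists C : R, forall (n k N : nat), (2 <= n)%N -> (0 < N)%N -> (N ^ d <= n)%N ->
    (#|[set S : {set torus N d} |
         (#|S| == k) && ((star_ncomp S)%:R <= k%:R / ln (n%:R : R))]|)%:R
    <= C ^+ k.
Proof.
(* The bound holds for every [d]. *)
exists (expR 2 * (2 ^ 3 ^ d)%:R) => n k N n_ge2 _ le_Nd_n.
have ln_gt0 : 0 < ln (n%:R : R) by rewrite ln_gt0 // ltr1n.
have ratio_ge0 : 0 <= k%:R / ln (n%:R : R) by rewrite divr_ge0 // ltW.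
set c := Num.truncn (k%:R / ln (n%:R : R)).
have c_ln_le : c%:R * ln (n%:R : R) <= k%:R by rewrite -ler_pdivlMr // truncn_le.
have sub_few : [set S : {set torus N d} |
    (#|S| == k) && ((star_ncomp S)%:R <= k%:R / ln (n%:R : R))]
    \subset few_comp (@star_adj N d) k c.
  by apply/subsetP => S; rewrite !inE => /andP[-> ncomp_le]; rewrite truncn_ge_nat.
have := leq_trans (subset_leq_card sub_few)
  (card_few_comp (@star_adj_sym N d) (@card_star_closed_nbhd N d) k c).
rewrite card_ffun !card_ord -(ler_nat R) => /le_trans; apply.
rewrite natrM exprMn ler_pM ?ler0n //; last by rewrite expnM natrX.
exact: natr_succX_le_expR n_ge2 le_Nd_n c_ln_le.
Qed.
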